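(* Let $\emptyset\neq I\subseteq\mathbb{R}^n$ and let $\mathcal{B}$ be a collection of non-empty subsets of $X$ covering $X$. (i) Let $\mathbb{D}\subseteq I$ be unbounded and suppose $A_I\neq\emptyset$. If a continuous $F:I\times X\to Y$ is $(\mathbb{D},\mathcal{B})$-slowly oscillating, then $F$ is $\mathbb{D}$-quasi-asymptotically $(\mathcal{B},I',1)$-almost periodic, where $I':=\bigcup_{\omega\in A_I}\omega\cdot\mathbb{N}$. (ii) Let $\mathbb{D}_j\subseteq I$ be unbounded for $j=1,\dots,n$. For each $\omega=(\omega_1,\dots,\omega_n)\in B_I$ let $\mathbb{D}_\omega$ be the set of all $\mathbf{t}\in\mathbb{D}_n$ such that $\mathbf{t}+\sum_{i=j+1}^n\omega_ie_i\in\mathbb{D}_j$ for all $j\in\{1,\dots,n-1\}$, and suppose each $\mathbb{D}_\omega$ is unbounded, that $\mathcal{D}:=\bigcap_{\omega\in B_I}\mathbb{D}_\omega$ is unbounded, and that $B_I\cap I\neq\emptyset$. Put $I':=\bigcup_{\omega\in B_I\cap I}\omega\cdot\mathbb{N}$. If $F:I\times X\to Y$ is $(\mathcal{B},(\mathbb{D}_j)_{j=1}^n)$-slowly oscillating, then $F$ is $\mathcal{D}$-quasi-asymptotically $(\mathcal{B},I',1)$-almost periodic.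
   Context: $X,Y$ complex Banach spaces; $e_1,\dots,e_n$ the standard basis of $\mathbb{R}^n$; $\omega\cdot\mathbb{N}=\{k\omega:k\in\mathbb{N}\}$; a tuple $(\omega_1,\dots,\omega_n)$ is identified with $\sum_j\omega_je_j$. $A_I:=\{\omega\in\mathbb{R}^n\setminus\{0\}:\omega+I\subseteq I\}$, $B_I:=\{(\omega_1,\dots,\omega_n)\in(\mathbb{R}\setminus\{0\})^n:\omega_je_j+I\subseteq I\text{ for all }j\}$. A continuous $F:I\times X\to Y$ is $(\mathbb{D},\mathcal{B})$-slowly oscillating if for each $B\in\mathcal{B}$ and $\omega\in A_I$, $\lim_{|\mathbf{t}|\to\infty,\mathbf{t}\in\mathbb{D}}\|F(\mathbf{t}+\omega;x)-F(\mathbf{t};x)\|_Y=0$ uniformly in $x\in B$. It is $(\mathcal{B},(\mathbb{D}_j)_{j=1}^n)$-slowly oscillating if for each $B\in\mathcal{B}$, $(\omega_1,\dots,\omega_n)\in B_I$ and $j$, $\lim_{|\mathbf{t}|\to\infty,\mathbf{t}\in\mathbb{D}_j}\|F(\mathbf{t}+\omega_je_j;x)-F(\mathbf{t};x)\|_Y=0$ uniformly in $x\in B$. For $\mathbb{D}\subseteq I$ unbounded, $I'$ unbounded with $I+I'\subseteq I$, $\mathbb{D}_M:=\{\mathbf{t}\in\mathbb{D}:|\mathbf{t}|\ge M\}$, a continuous $F$ is $\mathbb{D}$-quasi-asymptotically $(\mathcal{B},I',c)$-almost periodic if for every $B\in\mathcal{B}$ and $\epsilon>0$ there is $l>0$ such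 that for each $\mathbf{t}_0\in I'$ there is $\tau\in B(\mathbf{t}_0,l)\cap I'$ and a finite $M(\epsilon,\tau)>0$ with $\|F(\mathbf{t}+\tau;x)-cF(\mathbf{t};x)\|_Y\le\epsilon$ whenever $\mathbf{t},\mathbf{t}+\tau\in\mathbb{D}_{M(\epsilon,\tau)}$, $x\in B$. *)

From HB Require Import structures.
From mathcomp Require Import all_boot all_order all_algebra.
From mathcomp Require Import complex.
From mathcomp Require Import all_classical all_reals all_analysis.
Set Implicit Arguments. Unset Strict Implicit. Unset Printing Implicit Defensive.
Import Order.TTheory GRing.Theory Num.Theory.
Import numFieldNormedType.Exports.
Local Open Scope classical_set_scope.
Local Open Scope ring_scope.

Section Defs.
Variable R : realType.
Local Notation C := (R[i]).

Definition enorm n (t : 'rV[R]_n) : R := Num.sqrt (\sum_(i < n) (t ord0 i) ^+ 2).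

Definition ebase n (j : 'I_n) : 'rV[R]_n := \row_(i < n) (i == j)%:R.

Definition unbounded n (D : set 'rV[R]_n) : Prop :=
  forall M : R, exists2 t, D t & M < enorm t.

Definition A_set n (I : set 'rV[R]_n) : set 'rV[R]_n :=
  [set w | w != 0 /\ (forall t, I t -> I (w + t))].

Definition B_set n (I : set 'rV[R]_n) : set 'rV[R]_n :=
  [set w | forall j : 'I_n, w ord0 j != 0 /\
       (forall t, I t -> I (w ord0 j *: ebase j + t))].

Definition multN n (w : 'rV[R]_n) : set 'rV[R]_n :=
  [set k%:R *: w | k in [set k : nat | (0 < k)%N]].

Variables (X Y : completeNormedModType C).

Definition cont_on n (I : set 'rV[R]_n) (F : 'rV[R]_n -> X -> Y) : Prop :=
  {within I `*` [set: X], continuous (fun p : 'rV[R]_n * X => F p.1 p.2)}.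

Definition slowly_osc n (I D : set 'rV[R]_n) (Bc : set (set X))
  (F : 'rV[R]_n -> X -> Y) : Prop :=
  cont_on I F /\
  forall B, Bc B -> forall w, A_set I w ->
    forall eps : R, 0 < eps -> exists M : R, forall t, D t -> M <= enorm t ->
      forall x, B x -> `|F (t + w) x - F t x| < (eps%:C)%C.

Definition slowly_osc_j n (I : set 'rV[R]_n) (Dj : 'I_n -> set 'rV[R]_n)
  (Bc : set (set X)) (F : 'rV[R]_n -> X -> Y) : Prop :=
  cont_on I F /\
  forall B, Bc B -> forall w, B_set I w -> forall j : 'I_n,
    forall eps : R, 0 < eps -> exists M : R, forall t, Dj j t -> M <= enorm t ->
      forall x, B x -> `|F (t + w ord0 j *: ebase j) x - F t x| < (eps%:C)%C.

Definition Dge n (D : set 'rV[R]_n) (M : R) : set 'rV[R]_n :=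
  [set t | D t /\ M <= enorm t].

Definition quasi_asym_ap n (I D I' : set 'rV[R]_n) (Bc : set (set X)) (c : C)
  (F : 'rV[R]_n -> X -> Y) : Prop :=
  D `<=` I /\ unbounded D /\ unbounded I' /\
  (forall t tau, I t -> I' tau -> I (t + tau)) /\
  cont_on I F /\
  (forall B, Bc B -> forall eps : R, 0 < eps -> exists2 l : R, 0 < l &
    forall t0, I' t0 -> exists tau, I' tau /\ enorm (tau - t0) < l /\
      exists2 M : R, 0 < M & forall t x, Dge D M t -> Dge D M (t + tau) ->
        B x -> `|F (t + tau) x - c *: F t x| <= (eps%:C)%C).

(* D_omega for part (ii); indices shifted to 0..n (dimension n.+1),
   D_{n} is Dj ord_max, and j ranges over 0..n-1 (i.e. j < n) *)
Definition D_omega n (Dj : 'I_n.+1 -> set 'rV[R]_n.+1) (w : 'rV[R]_n.+1)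
  : set 'rV[R]_n.+1 :=
  [set t | Dj ord_max t /\
     forall j : 'I_n.+1, (j < n)%N ->
       Dj j (t + \sum_(i < n.+1 | (j < i)%N) w ord0 i *: ebase i)].

End Defs.

(* In both parts the set I' of admissible periods is a union of rays
   w . N over a set S of nonzero vectors under whose translations I is
   invariant.  We always pick the period tau := t0 itself (so any l > 0,
   here l = 1, works), and it remains to show that F (t + tau) - F t is
   uniformly small on B for t in D far enough from the origin:
   - in part (i) tau = k w lies again in A_I, so this is exactly slow
     oscillation along tau;
   - in part (ii) tau = k w lies again in B_I, and we telescope along the
     coordinate path t + om, ..., t + om_n e_n, t, whose j-th step is a
     slow oscillation along om_j e_j at a point of D_j (by definition of
     D_om); a uniform threshold over the n+1 coordinates splits eps. *)

From HB Require Import structures.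
From mathcomp Require Import all_boot all_order all_algebra.
From mathcomp Require Import complex.
From mathcomp Require Import all_classical all_reals all_analysis.
From mathcomp Require Import lra.
Import Order.TTheory GRing.Theory Num.Theory.
Import numFieldNormedType.Exports.
Local Open Scope classical_set_scope.
Local Open Scope ring_scope.

Set Implicit Arguments. Unset Strict Implicit. Unset Printing Implicit Defensive.

Section Euclidean.
Variable R : realType.

Definition esq n (t : 'rV[R]_n) : R := \sum_(i < n) (t ord0 i) ^+ 2.

Lemma esq_ge0 n (t : 'rV[R]_n) : 0 <= esq t.
Proof. by apply: sumr_ge0 => i _; rewrite sqr_ge0. Qed.

Lemma esq_le_shift n (a c : 'rV[R]_n) : esq a <= 2 * esq (a + c) + 2 * esq c.
Proof.
rewrite /esq !mulr_sumr -big_split /=; apply: ler_sum => i _.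
rewrite !mxE; have := sqr_ge0 (a ord0 i + 2 * c ord0 i); nra.
Qed.

Lemma enorm0 n : enorm (0 : 'rV[R]_n) = 0.
Proof. by rewrite /enorm big1 ?sqrtr0 // => i _; rewrite mxE expr0n. Qed.

Lemma enorm_gt0 n (w : 'rV[R]_n) : w != 0 -> 0 < enorm w.
Proof.
move=> w_neq0; rewrite sqrtr_gt0 lt_def -/(esq w) esq_ge0 andbT.
apply: contra w_neq0 => /eqP/psumr_eq0P esq_eq0.
apply/eqP/rowP => i; rewrite mxE; apply/eqP.
by rewrite -sqrf_eq0 esq_eq0 // => j _; rewrite sqr_ge0.
Qed.

Lemma enorm_natmul n k (w : 'rV[R]_n) : enorm (k%:R *: w) = k%:R * enorm w.
Proof.
rewrite /enorm (eq_bigr (fun i => k%:R ^+ 2 * w ord0 i ^+ 2)); last first.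
  by move=> i _; rewrite mxE exprMn.
by rewrite -mulr_sumr sqrtrM ?sqr_ge0 // sqrtr_sqr ger0_norm.
Qed.

Lemma enorm_translate_large n (c : 'rV[R]_n) (N : R) :
  exists M, forall t, M <= enorm t -> N <= enorm (t + c).
Proof.
exists (Num.sqrt (2 * N ^+ 2 + 2 * esq c)) => t.
rewrite /enorm -/(esq t) -/(esq (t + c)) ler_sqrt ?esq_ge0 // => t_far.
have N2_le : N ^+ 2 <= esq (t + c) by have := esq_le_shift t c; lra.
by apply: le_trans (ler_norm N) _; rewrite -sqrtr_sqr ler_sqrt ?esq_ge0.
Qed.

Lemma unbounded_multN n (w : 'rV[R]_n) : w != 0 -> unbounded (multN w).
Proof.
move=> /enorm_gt0 w_gt0 M; exists ((Num.truncn (M / enorm w)).+1%:R *: w).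
  by exists (Num.truncn (M / enorm w)).+1.
by rewrite enorm_natmul -ltr_pdivrMr // truncnS_gt.
Qed.

Lemma unbounded_multN_bigcup n (S : set 'rV[R]_n) w :
  S w -> w != 0 -> unbounded (\bigcup_(v in S) multN v).
Proof.
move=> Sw /unbounded_multN w_unb M; have [tau wtau M_lt] := w_unb M.
by exists tau => //; exists w.
Qed.

Lemma row_decomp n (w : 'rV[R]_n) : w = \sum_(i < n) w ord0 i *: ebase R i.
Proof.
apply/rowP => j; rewrite summxE (bigD1 j) //= big1 ?addr0.
  by rewrite !mxE eqxx mulr1.
by move=> i ij; rewrite !mxE eq_sym (negbTE ij) mulr0.
Qed.

End Euclidean.

Section Translation.
Variables (R : realType) (n : nat) (I : set 'rV[R]_n).

Definition shift_invariant (v : 'rV[R]_n) : Prop := forall t, I t -> I (v + t).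

Lemma shift_invariant_natmul v k :
  shift_invariant v -> shift_invariant (k%:R *: v).
Proof.
move=> Iv; elim: k => [|k IHk] t It; first by rewrite scale0r add0r.
by rewrite mulrS scalerDl scale1r -addrA; apply/Iv/IHk.
Qed.

Lemma A_set_natmul w k : A_set I w -> (0 < k)%N -> A_set I (k%:R *: w).
Proof.
move=> [w_neq0 Iw] k_gt0; split; last exact: shift_invariant_natmul.
by rewrite scaler_eq0 negb_or pnatr_eq0 -lt0n k_gt0.
Qed.

Lemma B_set_natmul w k : B_set I w -> (0 < k)%N -> B_set I (k%:R *: w).
Proof.
move=> Bw k_gt0 j; have [wj_neq0 Iwj] := Bw j; split.
  by rewrite mxE mulf_neq0 // pnatr_eq0 -lt0n.
by rewrite mxE -scalerA; exact: shift_invariant_natmul.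
Qed.

(* Translating by w amounts to translating along each coordinate in turn. *)
Lemma B_set_shift_invariant w : B_set I w -> shift_invariant w.
Proof.
move=> Bw; rewrite [w]row_decomp.
elim: (index_enum _) => [|j s IHs] t It; first by rewrite big_nil add0r.
by rewrite big_cons -addrA; apply: (Bw j).2; apply: IHs.
Qed.

Lemma bigcup_multN_translate (S : set 'rV[R]_n) :
  (forall w, S w -> shift_invariant w) ->
  forall t tau, I t -> (\bigcup_(w in S) multN w) tau -> I (t + tau).
Proof.
move=> S_inv t tau It [w Sw [k _ <-]]; rewrite addrC.
exact: shift_invariant_natmul (S_inv w Sw) _ It.
Qed.

End Translation.

Lemma B_set_neq0 (R : realType) n (I : set 'rV[R]_n.+1) w : B_set I w -> w != 0.
Proof. by move=> /(_ ord0)[w0_neq0 _]; apply: contra w0_neq0 => /eqP->; rewrite mxE. Qed.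

Section CoordinatePath.
Variables (R : realType) (n : nat) (om : 'rV[R]_n.+1).

(* tail_sum m = sum_{i >= m} om_i e_i; the points t + tail_sum m for
   m = 0, ..., n+1 go from t + om to t, one coordinate at a time. *)
Definition tail_sum (m : nat) : 'rV[R]_n.+1 :=
  \sum_(i < n.+1 | (m <= i)%N) om ord0 i *: ebase R i.

Lemma tail_sum0 : tail_sum 0 = om.
Proof. by rewrite [RHS]row_decomp. Qed.

Lemma tail_sum_end : tail_sum n.+1 = 0.
Proof. by rewrite /tail_sum big_pred0 // => i; rewrite leqNgt ltn_ord. Qed.

Lemma tail_sum_step (j : 'I_n.+1) :
  tail_sum j = tail_sum j.+1 + om ord0 j *: ebase R j.
Proof.
rewrite /tail_sum (bigD1 j) //= addrC; congr (_ + _).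
by apply: eq_bigl => i; rewrite ltn_neqAle andbC eq_sym.
Qed.

Lemma D_omega_path (Dj : 'I_n.+1 -> set 'rV[R]_n.+1) t :
  D_omega Dj om t -> forall j : 'I_n.+1, Dj j (t + tail_sum j.+1).
Proof.
move=> [Dmax Dlt] j; case: (ltnP j n) => [jn | nj]; first exact: Dlt.
have -> : j = ord_max by apply: val_inj; apply/eqP; rewrite eqn_leq -ltnS ltn_ord.
by rewrite tail_sum_end addr0.
Qed.

End CoordinatePath.

Lemma uniform_threshold (R : realDomainType) m (P : 'I_m -> R -> Prop) :
  (forall j, exists Mj, forall M, Mj <= M -> P j M) -> exists M, forall j, P j M.
Proof.
move=> /boolp.choice[Mj PMj]; exists (\sum_(j < m) `|Mj j|) => j.
apply: PMj; apply: le_trans (ler_norm _) _.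
by rewrite (bigD1 j) //= lerDl sumr_ge0.
Qed.

Lemma norm_telescope_le (K : numDomainType) (V : normedZmodType K)
  (g : nat -> V) m : `|g 0%N - g m| <= \sum_(j < m) `|g j.+1 - g j|.
Proof.
rewrite -normrN opprB -telescope_sumr // big_mkord.
exact: ler_norm_sum.
Qed.

Section Oscillation.
Variables (R : realType) (X Y : completeNormedModType R[i]).

(* Abstract criterion: if every admissible period tau is an asymptotic
   period of F on D, uniformly on each B, then F is D-quasi-asymptotically
   (Bc, I', 1)-almost periodic (taking tau := t0 and l := 1). *)
Lemma quasi_asym_ap_of_shift_estimates n (I D I' : set 'rV[R]_n)
    (Bc : set (set X)) (F : 'rV[R]_n -> X -> Y) :
  D `<=` I -> unbounded D -> unbounded I' ->
  (forall t tau, I t -> I' tau -> I (t + tau)) -> cont_on I F ->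
  (forall B, Bc B -> forall tau, I' tau -> forall eps : R, 0 < eps ->
     exists M, forall t x, Dge D M t -> B x ->
       `|F (t + tau) x - F t x| <= (eps%:C)%C) ->
  quasi_asym_ap I D I' Bc 1 F.
Proof.
move=> DI Dunb I'unb I'I Fc shift_small; repeat split => //.
move=> B BcB eps eps_gt0; exists 1 => // t0 I't0; exists t0.
split=> //; split; first by rewrite subrr enorm0.
have [M HM] := shift_small B BcB t0 I't0 eps eps_gt0.
exists (Num.max M 1); first by rewrite lt_max ltr01 orbT.
move=> t x [Dt Mt] _ Bx; rewrite scale1r; apply: HM => //; split => //.
by apply: le_trans Mt; rewrite le_max lexx.
Qed.

Lemma slowly_osc_shift_estimate n (I D : set 'rV[R]_n) (Bc : set (set X))
    (F : 'rV[R]_n -> X -> Y) B tau (eps : R) :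
  slowly_osc I D Bc F -> Bc B -> A_set I tau -> 0 < eps ->
  exists M, forall t x, Dge D M t -> B x ->
    `|F (t + tau) x - F t x| <= (eps%:C)%C.
Proof.
move=> [_ Fosc] BcB Atau eps_gt0; have [M HM] := Fosc B BcB tau Atau eps eps_gt0.
by exists M => t x [Dt Mt] Bx; apply/ltW/HM.
Qed.

(* Part (ii): a vector om of B_I is an asymptotic period on D_om of a
   (Bc, (D_j)_j)-slowly oscillating function: telescope along the
   coordinate path, each of the n+1 steps contributing at most eps/(n+1). *)
Lemma slowly_osc_j_shift_estimate n (I : set 'rV[R]_n.+1)
    (Dj : 'I_n.+1 -> set 'rV[R]_n.+1) (Bc : set (set X))
    (F : 'rV[R]_n.+1 -> X -> Y) B om (eps : R) :
  slowly_osc_j I Dj Bc F -> Bc B -> B_set I om -> 0 < eps ->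
  exists M, forall t x, D_omega Dj om t -> M <= enorm t -> B x ->
    `|F (t + om) x - F t x| <= (eps%:C)%C.
Proof.
move=> [_ Fosc] BcB Bom eps_gt0; pose eps' := eps / n.+1%:R.
have eps'_gt0 : 0 < eps' by rewrite divr_gt0.
have [M step_small] : exists M, forall (j : 'I_n.+1) t, M <= enorm t ->
    Dj j (t + tail_sum om j.+1) -> forall x, B x ->
    `|F (t + tail_sum om j) x - F (t + tail_sum om j.+1) x| < (eps'%:C)%C.
  apply: uniform_threshold => j.
  have [Mj HMj] := Fosc B BcB om Bom j eps' eps'_gt0.
  have [M far] := enorm_translate_large (tail_sum om j.+1) Mj.
  exists M => M' MM' t M't Dt x Bx; rewrite tail_sum_step addrA.
  by apply: HMj => //; apply/far/(le_trans MM').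
exists M => t x Dt Mt Bx; pose g m := F (t + tail_sum om m) x.
have -> : F (t + om) x - F t x = g 0%N - g n.+1.
  by rewrite /g tail_sum0 tail_sum_end addr0.
apply: le_trans (norm_telescope_le g n.+1) _.
have -> : (eps%:C)%C = \sum_(j < n.+1) (eps'%:C)%C.
  by rewrite sumr_const card_ord -rmorphMn /= /eps' -mulr_natr mulfVK.
apply: ler_sum => j _; rewrite distrC; apply/ltW/step_small => //.
exact: D_omega_path.
Qed.

End Oscillation.

Theorem proposition3p7 (R : realType) (X Y : completeNormedModType R[i])
  (n : nat) (I : set 'rV[R]_n.+1) (Bc : set (set X)) :
  I !=set0 ->
  (forall B, Bc B -> B !=set0) ->
  \bigcup_(B in Bc) B = [set: X] ->
  (* (i) *)
  (forall (D : set 'rV[R]_n.+1) (F : 'rV[R]_n.+1 -> X -> Y),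
     D `<=` I -> unbounded D -> A_set I !=set0 ->
     slowly_osc I D Bc F ->
     quasi_asym_ap I D (\bigcup_(w in A_set I) multN w) Bc 1 F) /\
  (* (ii) *)
  (forall (Dj : 'I_n.+1 -> set 'rV[R]_n.+1) (F : 'rV[R]_n.+1 -> X -> Y),
     (forall j, Dj j `<=` I) -> (forall j, unbounded (Dj j)) ->
     (forall w, B_set I w -> unbounded (D_omega Dj w)) ->
     unbounded (\bigcap_(w in B_set I) D_omega Dj w) ->
     B_set I `&` I !=set0 ->
     slowly_osc_j I Dj Bc F ->
     quasi_asym_ap I (\bigcap_(w in B_set I) D_omega Dj w)
       (\bigcup_(w in B_set I `&` I) multN w) Bc 1 F).
Proof.
move=> _ _ _; split.
- move=> D F DI Dunb [w0 Aw0] Fosc.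
  apply: quasi_asym_ap_of_shift_estimates => //.
  + exact: unbounded_multN_bigcup Aw0 Aw0.1.
  + by apply: bigcup_multN_translate => w [].
  + exact: Fosc.1.
  + move=> B BcB _ [w Aw [k k_gt0 <-]] eps eps_gt0.
    exact: slowly_osc_shift_estimate Fosc BcB (A_set_natmul Aw k_gt0) eps_gt0.
- move=> Dj F DjI _ _ Dunb [w0 Sw0] Fosc.
  apply: quasi_asym_ap_of_shift_estimates => //.
  + by move=> t Dt; apply: DjI (Dt w0 Sw0.1).1.
  + exact: unbounded_multN_bigcup Sw0 (B_set_neq0 Sw0.1).
  + apply: bigcup_multN_translate => w [Bw _]; exact: B_set_shift_invariant.
  + exact: Fosc.1.
  + move=> B BcB _ [w [Bw _] [k k_gt0 <-]] eps eps_gt0.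
    have Bkw := B_set_natmul Bw k_gt0.
    have [M HM] := slowly_osc_j_shift_estimate Fosc BcB Bkw eps_gt0.
    by exists M => t x [Dt Mt] Bx; apply: HM => //; apply: Dt.
Qed.
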